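(* Let $\Xi$ be an orthogonally invariant FQ operation (scalar, vectorial, or pseudoscalar) and let $\tilde p^{[s]}_{i_1,\dots,i_r}$ denote its coefficients in the circular basis, where $s\in\{0\}$ (scalar), $s\in\{1,2\}$ (the two components of a vectorial operation) or $s=12$ (pseudoscalar). Let $\iota=(i_1,\dots,i_r)$ with all $i_j\in\{4,5\}$, and put $d=\mathrm{Mult}^4_\iota-\mathrm{Mult}^5_\iota$, where $\mathrm{Mult}^x_\iota$ is the number of occurrences of $x$ in $\iota$. If $d\neq 0$, and moreover either $s\in\{0,12\}$ or $d\neq 1$, then $\tilde p^{[s]}_{i_1,\dots,i_r}=0$. (Thus the only coefficients of this kind not forced to vanish by orthogonal invariance are those with $d=0$, any $s$, and those with $d=1$, $s\in\{1,2\}$.)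
   Context: Setting. $(Q_1,Q_2)$ is a Clifford system: $Q_1^2=Q_2^2=-1$, $Q_1Q_2=-Q_2Q_1$. $R_1,R_2$ are formal noncommuting infinitesimal variables; one works in the real algebra generated by $Q_1,Q_2,R_1,R_2$ (free apart from the Clifford relations), completed with respect to total degree in $R_1,R_2$, or in extensions of it by further formal infinitesimal elements. Put $A_i=Q_i+R_i$. For $Q$ with $Q^2=-1$ and any $X$ put $X^0_Q=\frac12(X+Q^{-1}XQ)$, $X^1_Q=\frac12(X-Q^{-1}XQ)$. The split variables are $r_1,\dots,r_8$: for $j\in\{1,2\}$, $\iota_1,\iota_2\in\{0,1\}$, $r_{4(j-1)+2\iota_1+\iota_2+1}=((R_jQ_j^{-1})^{\iota_1}_{Q_1})^{\iota_2}_{Q_2}$ (so $r_k$ commutes with $Q_m$ if $\iota_m=0$ and anticommutes if $\iota_m=1$). An FQ operation around $(Q_1,Q_2)$ is given by formal real noncommutative power series in eight variables: scalar $\Xi(A_1,A_2)=f_0(r_1,\dots,r_8)$, vectorial $\Xi(A_1,A_2)=(f_1(r)Q_1,f_2(r)Q_2)$, pseudoscalar $\Xi(A_1,A_2)=f_{12}(r)Q_1Q_2$; the operation is identified with this family of series. The same series can be evaluated relative to any other Clifford system $(Q_1',Q_2')$ at $(A_1',A_2')$ with $A'_i-Q'_i$ infinitesimal, by forming the split variables of $A_i'-Q_i'$ relative to $(Q'_1,Q'_2)$ and multiplying by $Q'_s$. Mixed basis: $\hat r_1=\frac12(r_2-r_7)$, $\hat r_2=\frac12(r_2+r_7)$,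 $\hat r_3=\frac12(r_1+r_5)$, $\hat r_4=\frac12(r_1-r_5)$, $\hat r_5=\frac12(r_4-r_8)$, $\hat r_6=\frac12(r_4+r_8)$, $\hat r_7=\frac12(r_3+r_6)$, $\hat r_8=\frac12(r_3-r_6)$. Circular basis: $\tilde r_i=\hat r_i$ for $i\notin\{4,5\}$, $\tilde r_4=\hat r_4+\hat r_5$, $\tilde r_5=\hat r_4-\hat r_5$. Rewriting $f_s$ as a noncommutative power series in $\tilde r_1,\dots,\tilde r_8$, $\tilde p^{[s]}_{i_1,\dots,i_r}$ is the coefficient of $\tilde r_{i_1}\cdots\tilde r_{i_r}$. Orthogonal invariance: let $t$ be a central formal variable with $t^2=0$ and $\mathrm{Rot}_t(B_1,B_2)=(B_1+tB_2,\,B_2-tB_1)$ (then $\mathrm{Rot}_t(Q_1,Q_2)$ is again a Clifford system). A (pseudo)scalar $\Xi$ is orthogonally invariant if $\Xi_{(Q_1,Q_2)}(A_1,A_2)=\Xi_{\mathrm{Rot}_t(Q_1,Q_2)}(\mathrm{Rot}_t(A_1,A_2))$; a vectorial $\Xi$ is orthogonally invariant if $\mathrm{Rot}_t(\Xi_{(Q_1,Q_2)}(A_1,A_2))=\Xi_{\mathrm{Rot}_t(Q_1,Q_2)}(\mathrm{Rot}_t(A_1,A_2))$; here the subscript indicates the base Clifford system relative to which the series is evaluated. *)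

From HB Require Import structures.
From mathcomp Require Import all_boot all_order all_algebra.
Set Implicit Arguments. Unset Strict Implicit. Unset Printing Implicit Defensive.
Import Order.TTheory GRing.Theory Num.Theory.
Local Open Scope ring_scope.

Section FQ.
Variable R : realFieldType.

(* Basis of the Clifford part: (b1,b2) stands for Q1^b1 Q2^b2. *)
Definition basis := (bool * bool)%type.

(* The (completed) algebra, extended by a central t with t^2 = 0.
   An element X is the formal sum of X u e tau * r_u * e * t^tau, where
   r_u = r_{u_1} ... r_{u_n} is a noncommutative monomial in the split
   variables r_1..r_8 (indexed 0-based by 'I_8), e a basis element, tau : bool. *)
Definition alg := seq 'I_8 -> basis -> bool -> R.

(* Formal noncommutative power series in 8 variables (coefficient of r_w). *)
Definition pser := seq 'I_8 -> R.

Definition sgn (b : bool) : R := if b then -1 else 1.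

(* r_k, k = 4(j-1) + 2 iota1 + iota2 (0-based) *)
Definition iota1 (k : 'I_8) : bool := odd (k %/ 2).
Definition iota2 (k : 'I_8) : bool := odd k.

(* e r_k = (-1)^(lsign e k) r_k e *)
Definition lsign (e : basis) (k : 'I_8) : bool :=
  (e.1 && iota1 k) (+) (e.2 && iota2 k).
Definition wsign (e : basis) (w : seq 'I_8) : bool :=
  foldr (fun k b => lsign e k (+) b) false w.
(* (Q1^a1 Q2^a2)(Q1^b1 Q2^b2) = (-1)^(bsign a b) Q1^(a1+b1) Q2^(a2+b2) *)
Definition bmul (a b : basis) : basis := (a.1 (+) b.1, a.2 (+) b.2).
Definition bsign (a b : basis) : bool :=
  (a.2 && b.1) (+) (a.1 && b.1) (+) (a.2 && b.2).

Definition alg_add (X Y : alg) : alg := fun u e tau => X u e tau + Y u e tau.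
Definition alg_opp (X : alg) : alg := fun u e tau => - X u e tau.
Definition alg_scale (c : R) (X : alg) : alg := fun u e tau => c * X u e tau.
Definition alg_mul (X Y : alg) : alg := fun u e tau =>
  \sum_(i < (size u).+1) \sum_(e1 : basis) \sum_(e2 : basis)
   \sum_(t1 : bool) \sum_(t2 : bool)
    (if (bmul e1 e2 == e) && (nat_of_bool t1 + nat_of_bool t2 == nat_of_bool tau)%N
     then sgn (wsign e1 (drop i u) (+) bsign e1 e2)
            * X (take i u) e1 t1 * Y (drop i u) e2 t2
     else 0).

Definition alg_mono (w : seq 'I_8) (e : basis) (tau : bool) : alg :=
  fun u e' tau' => if (u == w) && (e' == e) && (tau' == tau) then 1 else 0.

Definition alg1 : alg := alg_mono [::] (false, false) false.
Definition Q1 : alg := alg_mono [::] (true, false) false.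
Definition Q2 : alg := alg_mono [::] (false, true) false.
Definition tt : alg := alg_mono [::] (false, false) true.
Definition gen (k : 'I_8) : alg := alg_mono [:: k] (false, false) false.

Definition o8 (n : nat) (H : (n < 8)%N) : 'I_8 := Ordinal H.
Arguments o8 n H : clear implicits.

Definition Rv1 : alg :=
  alg_mul (alg_add (gen (o8 0 isT)) (alg_add (gen (o8 1 isT))
          (alg_add (gen (o8 2 isT)) (gen (o8 3 isT))))) Q1.
Definition Rv2 : alg :=
  alg_mul (alg_add (gen (o8 4 isT)) (alg_add (gen (o8 5 isT))
          (alg_add (gen (o8 6 isT)) (gen (o8 7 isT))))) Q2.
Definition A1 : alg := alg_add Q1 Rv1.
Definition A2 : alg := alg_add Q2 Rv2.

(* For Q with Q^2 = -1, Q^{-1} = -Q. *)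
Definition Qinv (Q : alg) : alg := alg_opp Q.
Definition part0 (Q X : alg) : alg :=
  alg_scale (2%:R)^-1 (alg_add X (alg_mul (alg_mul (Qinv Q) X) Q)).
Definition part1 (Q X : alg) : alg :=
  alg_scale (2%:R)^-1 (alg_add X (alg_opp (alg_mul (alg_mul (Qinv Q) X) Q))).
Definition part (b : bool) : alg -> alg -> alg := if b then part1 else part0.

Definition splitv (P1 P2 B1 B2 : alg) (k : 'I_8) : alg :=
  let X := if (k < 4)%N then alg_mul (alg_add B1 (alg_opp P1)) (Qinv P1)
           else alg_mul (alg_add B2 (alg_opp P2)) (Qinv P2) in
  part (iota2 k) P2 (part (iota1 k) P1 X).

Definition wprod (x : 'I_8 -> alg) (w : seq 'I_8) : alg :=
  foldr (fun k acc => alg_mul (x k) acc) alg1 w.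

(* evaluation of a power series at infinitesimal arguments x_1..x_8 (no
   word-degree-0 component); the truncation n <= size u is then exact. *)
Definition ps_eval (f : pser) (x : 'I_8 -> alg) : alg := fun u e tau =>
  \sum_(n < (size u).+1) \sum_(w : n.-tuple 'I_8) f w * wprod x w u e tau.

Definition rot (B : alg * alg) : alg * alg :=
  (alg_add B.1 (alg_mul tt B.2), alg_add B.2 (alg_opp (alg_mul tt B.1))).

Inductive fqop := FQScalar of pser | FQVect of pser & pser | FQPseudo of pser.

Definition evS (f : pser) (P B : alg * alg) : alg :=
  ps_eval f (splitv P.1 P.2 B.1 B.2).
Definition evV (f1 f2 : pser) (P B : alg * alg) : alg * alg :=
  (alg_mul (ps_eval f1 (splitv P.1 P.2 B.1 B.2)) P.1,
   alg_mul (ps_eval f2 (splitv P.1 P.2 B.1 B.2)) P.2).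
Definition evP (f : pser) (P B : alg * alg) : alg :=
  alg_mul (alg_mul (ps_eval f (splitv P.1 P.2 B.1 B.2)) P.1) P.2.

Definition orth_invariant (Xi : fqop) : Prop :=
  match Xi with
  | FQScalar f => evS f (Q1, Q2) (A1, A2) = evS f (rot (Q1, Q2)) (rot (A1, A2))
  | FQVect f1 f2 => rot (evV f1 f2 (Q1, Q2) (A1, A2))
                    = evV f1 f2 (rot (Q1, Q2)) (rot (A1, A2))
  | FQPseudo f => evP f (Q1, Q2) (A1, A2) = evP f (rot (Q1, Q2)) (rot (A1, A2))
  end.

(* Mixed and circular bases; indices n are the paper's 1-based ones.
   rc n l = coefficient of r_l (0-based l) in r_n. *)
Definition rc (n : nat) (l : 'I_8) : R := if (l.+1 == n)%N then 1 else 0.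
Definition mixed_coef (n : nat) (l : 'I_8) : R := (2%:R)^-1 *
  match n with
  | 1 => rc 2 l - rc 7 l | 2 => rc 2 l + rc 7 l
  | 3 => rc 1 l + rc 5 l | 4 => rc 1 l - rc 5 l
  | 5 => rc 4 l - rc 8 l | 6 => rc 4 l + rc 8 l
  | 7 => rc 3 l + rc 6 l | 8 => rc 3 l - rc 6 l
  | _ => 0 end.
Definition circ_coef (n : nat) (l : 'I_8) : R :=
  match n with
  | 4 => mixed_coef 4 l + mixed_coef 5 l
  | 5 => mixed_coef 4 l - mixed_coef 5 l
  | _ => mixed_coef n l end.
(* circ_mx i l = coefficient of r_l in rtilde_i (both 0-based) *)
Definition circ_mx : 'M[R]_8 := \matrix_(i < 8, l < 8) circ_coef i.+1 l.

(* coefficient of rtilde_{v_1} ... rtilde_{v_r} in f rewritten in the circular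
   basis, i.e. after substituting r = circ_mx^{-1} rtilde *)
Definition ptilde (f : pser) (v : seq 'I_8) : R :=
  \sum_(w : (size v).-tuple 'I_8)
     f w * \prod_(i < size v) (invmx circ_mx) (tnth w i) (tnth (in_tuple v) i).

End FQ.

Arguments o8 n H : clear implicits.
Arguments Q1 {R}. Arguments Q2 {R}. Arguments A1 {R}. Arguments A2 {R}.

Inductive sidx := s_0 | s_1 | s_2 | s_12.

Definition fq_component (R : realFieldType) (Xi : fqop R) (s : sidx) : option (pser R) :=
  match Xi, s with
  | FQScalar f, s_0 => Some f
  | FQVect f1 _, s_1 => Some f1
  | FQVect _ f2, s_2 => Some f2
  | FQPseudo f, s_12 => Some f
  | _, _ => None
  end.

(* 0-based indices of rtilde_4 and rtilde_5 *)
Definition idx4 : 'I_8 := o8 3 isT.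
Definition idx5 : 'I_8 := o8 4 isT.

From Pilot Require Import Defs.
From mathcomp Require Import all_boot all_algebra.
From Stdlib Require Import FunctionalExtensionality.
From mathcomp Require Import ring.
Import GRing.Theory Num.Theory.
Set Implicit Arguments. Unset Strict Implicit. Unset Printing Implicit Defensive.
Local Open Scope ring_scope.

(* At the base (Q_1, Q_2) the split variables of (A_1, A_2) are just r_k,
   while relative to the rotated system they become r_k + t (M r)_k Q_1 Q_2
   for an explicit rational 8x8 matrix M.  Comparing coefficients of
   t Q_1 Q_2, orthogonal invariance says that the derivation D of the free
   algebra with D r_k = (M r)_k (twisted by the sign of moving Q_1 Q_2 to the
   right) satisfies D f = 0 for scalar and pseudoscalar operations, and
   D f_1 = f_2 - f_1, D f_2 = f_1 - f_2 for vectorial ones.  The variables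
   rtilde_4, rtilde_5 commute with Q_1 Q_2 and their coordinate functionals
   are eigenvectors of M with eigenvalues -2 and 2; hence D multiplies the
   coefficient of a word in rtilde_4, rtilde_5 by lambda = -2d.  So
   lambda p = 0, resp. (lambda + 1) p_1 = p_2 and (lambda + 1) p_2 = p_1,
   which gives lambda (lambda + 2) p_s = 0 with lambda + 2 = -2(d - 1). *)

(* A list of terms (c, (w, e, tau)) stands for the element sum c r_w e t^tau
   of [alg], with rational coefficients so that products can be evaluated. *)
Definition key := (seq 'I_8 * basis * bool)%type.
Definition term := (rat * key)%type.

Definition coef (L : seq term) (k : key) : rat :=
  foldr (fun x acc => (if x.2 == k then x.1 else 0) + acc) 0 L.

Definition terms_eq (L1 L2 : seq term) : bool :=
  all (fun k => coef L1 k == coef L2 k) (map snd (L1 ++ L2)).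

Definition sgnq (b : bool) : rat := if b then -1 else 1.

Definition term_mul (x y : term) : seq term :=
  let: (c1, (w1, e1, t1)) := x in let: (c2, (w2, e2, t2)) := y in
  if t1 && t2 then [::]
  else [:: (c1 * c2 * sgnq (wsign e1 w2 (+) bsign e1 e2),
            (w1 ++ w2, bmul e1 e2, t1 || t2))].

Definition terms_mul (L1 L2 : seq term) : seq term :=
  flatten [seq term_mul x y | x <- L1, y <- L2].

Definition terms_scale (c : rat) (L : seq term) : seq term :=
  [seq (c * x.1, x.2) | x <- L].

Definition terms_part (b : bool) (P X : seq term) : seq term :=
  let Y := terms_mul (terms_mul (terms_scale (-1) P) X) P in
  terms_scale (2%:R)^-1 (X ++ (if b then terms_scale (-1) Y else Y)).

Definition terms_splitv (P1 P2 B1 B2 : seq term) (k : 'I_8) : seq term :=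
  let X := if (k < 4)%N then terms_mul (B1 ++ terms_scale (-1) P1) (terms_scale (-1) P1)
           else terms_mul (B2 ++ terms_scale (-1) P2) (terms_scale (-1) P2) in
  terms_part (iota2 k) P2 (terms_part (iota1 k) P1 X).

Definition mono (w : seq 'I_8) (e : basis) (t : bool) : seq term := [:: (1, (w, e, t))].

Definition b0 : basis := (false, false).
Definition bJ : basis := (true, true).

Definition tQ1 : seq term := mono [::] (true, false) false.
Definition tQ2 : seq term := mono [::] (false, true) false.
Definition tA1 : seq term :=
  tQ1 ++ terms_mul (mono [:: o8 0 isT] b0 false ++ (mono [:: o8 1 isT] b0 false
    ++ (mono [:: o8 2 isT] b0 false ++ mono [:: o8 3 isT] b0 false))) tQ1.
Definition tA2 : seq term :=
  tQ2 ++ terms_mul (mono [:: o8 4 isT] b0 false ++ (mono [:: o8 5 isT] b0 false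
    ++ (mono [:: o8 6 isT] b0 false ++ mono [:: o8 7 isT] b0 false))) tQ2.

Definition terms_rot (B : seq term * seq term) : seq term * seq term :=
  (B.1 ++ terms_mul (mono [::] b0 true) B.2,
   B.2 ++ terms_scale (-1) (terms_mul (mono [::] b0 true) B.1)).

(* Relative to the rotated system the split variable r_k (0-based) of the
   rotated (A_1, A_2) is r_k + t (sum_l rotM k l r_l) Q_1 Q_2. *)
Definition rotM (k l : nat) : rat :=
  match k, l with
  | 0, 3 => -1 | 0, 7 => 1 | 1, 1 => -1 | 1, 6 => 1 | 2, 2 => -1 | 2, 5 => 1
  | 3, 0 => -1 | 3, 4 => 1 | 4, 7 => -1 | 4, 3 => 1 | 5, 5 => -1 | 5, 2 => 1
  | 6, 6 => -1 | 6, 1 => 1 | 7, 4 => -1 | 7, 0 => 1 | _, _ => 0 end.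

(* Spelled out because [ord_enum 8] does not reduce under [vm_compute]. *)
Definition ords : seq 'I_8 := [:: o8 0 isT; o8 1 isT; o8 2 isT; o8 3 isT;
  o8 4 isT; o8 5 isT; o8 6 isT; o8 7 isT].

Lemma mem_ords (k : 'I_8) : k \in ords.
Proof. by case: k => [[|[|[|[|[|[|[|[|//]]]]]]]]] ?; rewrite !inE. Qed.

Definition svar_terms (M : nat -> nat -> rat) (k : 'I_8) : seq term :=
  (1, ([:: k], b0, false)) :: [seq (M k l, ([:: l], bJ, true)) | l : 'I_8 <- ords].

Lemma terms_splitv_base : all (fun k =>
  terms_eq (terms_splitv tQ1 tQ2 tA1 tA2 k) (svar_terms (fun _ _ => 0) k)) ords.
Proof. by vm_compute. Qed.

Lemma terms_splitv_rot : all (fun k =>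
  terms_eq (terms_splitv (terms_rot (tQ1, tQ2)).1 (terms_rot (tQ1, tQ2)).2
                         (terms_rot (tA1, tA2)).1 (terms_rot (tA1, tA2)).2 k)
           (svar_terms rotM k)) ords.
Proof. by vm_compute. Qed.

Lemma terms_rotQ :
  terms_eq (terms_rot (tQ1, tQ2)).1 (tQ1 ++ mono [::] (false, true) true)
  && terms_eq (terms_rot (tQ1, tQ2)).2 (tQ2 ++ terms_scale (-1) (mono [::] (true, false) true)).
Proof. by vm_compute. Qed.

Lemma coef_cat L1 L2 k : coef (L1 ++ L2) k = coef L1 k + coef L2 k.
Proof. by elim: L1 => [|x L IH] /=; rewrite ?add0r // IH addrA. Qed.

Lemma coef_scale c L k : coef (terms_scale c L) k = c * coef L k.
Proof.
elim: L => [|x L IH] /=; first by rewrite mulr0.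
by rewrite IH mulrDr; case: ifP; rewrite ?mulr0.
Qed.

Lemma coef_notin L k : k \notin map snd L -> coef L k = 0.
Proof.
elim: L => [|x L IH] //=; rewrite inE negb_or => /andP[nk /IH ->].
by rewrite eq_sym (negbTE nk) addr0.
Qed.

Lemma coef_terms_eq L1 L2 : terms_eq L1 L2 -> coef L1 =1 coef L2.
Proof.
move=> /allP eqL k; case: (boolP (k \in map snd (L1 ++ L2))) => [/eqL/eqP //|].
by rewrite map_cat mem_cat negb_or => /andP[k1 k2]; rewrite !coef_notin.
Qed.

Lemma key_eq (w u : seq 'I_8) (e e' : basis) (t t' : bool) :
  ((w, e, t) == (u, e', t')) = (u == w) && (e' == e) && (t' == t).
Proof. by rewrite !xpair_eqE [w == _]eq_sym [e == _]eq_sym [t == _]eq_sym. Qed.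

Lemma coef_map_J (s : seq 'I_8) (g : 'I_8 -> rat) u b t : uniq s ->
  coef [seq (g l, ([:: l], bJ, true)) | l <- s] (u, b, t) =
  if u is [:: a] then (if t && (b == bJ) && (a \in s) then g a else 0) else 0.
Proof.
elim: s => [|l s IH] /=; first by case: u => [|a [|]] //; rewrite andbF.
move=> /andP[nl us]; rewrite IH // key_eq.
case: u {IH} => [|a [|a' u]] /=; rewrite ?add0r ?addr0 ?eqseq_cons ?andbF //=.
rewrite inE andbT; case: t; case: (b == bJ); rewrite /= ?andbF ?add0r ?addr0 //.
case: eqP => [->|_] /=; last by rewrite add0r.
by rewrite (negbTE nl) addr0.
Qed.

Lemma sum_only1 (V : nmodType) (T : finType) (a : T) (F : T -> V) :
  (forall x, x != a -> F x = 0) -> \sum_x F x = F a.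
Proof. by move=> F0; apply: big_only1 => // x /F0. Qed.
Arguments sum_only1 {V T} a {F}.

Section Denotation.
Variable R : realFieldType.
Implicit Types X Y Z : alg R.

Lemma algE X Y : (forall u e t, X u e t = Y u e t) -> X = Y.
Proof. by move=> eqXY; do 3!apply: functional_extensionality => ?; exact: eqXY. Qed.

Lemma alg_mul_combl a b X X' Y :
  alg_mul (fun u e t => a * X u e t + b * X' u e t) Y
  = fun u e t => a * alg_mul X Y u e t + b * alg_mul X' Y u e t.
Proof.
apply: algE => u e t; rewrite /alg_mul.
do 5![rewrite !mulr_sumr -big_split; apply: eq_bigr => ? _].
by case: ifP => _ /=; [ring | rewrite !mulr0 addr0].
Qed.

Lemma alg_mul_combr a b X Y Y' :
  alg_mul X (fun u e t => a * Y u e t + b * Y' u e t)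
  = fun u e t => a * alg_mul X Y u e t + b * alg_mul X Y' u e t.
Proof.
apply: algE => u e t; rewrite /alg_mul.
do 5![rewrite !mulr_sumr -big_split; apply: eq_bigr => ? _].
by case: ifP => _ /=; [ring | rewrite !mulr0 addr0].
Qed.

Definition alg0 : alg R := fun _ _ _ => 0.

Lemma alg_mul_addl X Y Z : alg_mul (alg_add X Y) Z = alg_add (alg_mul X Z) (alg_mul Y Z).
Proof.
have -> : alg_add X Y = fun u e t => 1 * X u e t + 1 * Y u e t.
  by apply: algE => * /=; rewrite !mul1r.
by rewrite alg_mul_combl; apply: algE => * /=; rewrite !mul1r.
Qed.

Lemma alg_mul_addr X Y Z : alg_mul X (alg_add Y Z) = alg_add (alg_mul X Y) (alg_mul X Z).
Proof.
have -> : alg_add Y Z = fun u e t => 1 * Y u e t + 1 * Z u e t.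
  by apply: algE => * /=; rewrite !mul1r.
by rewrite alg_mul_combr; apply: algE => * /=; rewrite !mul1r.
Qed.

Lemma alg_mul_scalel a X Y : alg_mul (alg_scale a X) Y = alg_scale a (alg_mul X Y).
Proof.
have -> : alg_scale a X = fun u e t => a * X u e t + 0 * X u e t.
  by apply: algE => * /=; rewrite mul0r addr0.
by rewrite alg_mul_combl; apply: algE => * /=; rewrite mul0r addr0.
Qed.

Lemma alg_mul_scaler a X Y : alg_mul X (alg_scale a Y) = alg_scale a (alg_mul X Y).
Proof.
have -> : alg_scale a Y = fun u e t => a * Y u e t + 0 * Y u e t.
  by apply: algE => * /=; rewrite mul0r addr0.
by rewrite alg_mul_combr; apply: algE => * /=; rewrite mul0r addr0.
Qed.

Lemma alg_mul_oppr X Y : alg_mul X (alg_opp Y) = alg_opp (alg_mul X Y).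
Proof.
have -> : alg_opp Y = fun u e t => -1 * Y u e t + 0 * Y u e t.
  by apply: algE => * /=; rewrite mul0r addr0 mulN1r.
by rewrite alg_mul_combr; apply: algE => * /=; rewrite mul0r addr0 mulN1r.
Qed.

Lemma alg_mul_0l X : alg_mul alg0 X = alg0.
Proof.
have -> : alg0 = fun u e t => 0 * alg0 u e t + 0 * alg0 u e t.
  by apply: algE => * /=; rewrite mul0r addr0.
by rewrite alg_mul_combl; apply: algE => * /=; rewrite !mul0r addr0.
Qed.

Lemma alg_mul_0r X : alg_mul X alg0 = alg0.
Proof.
have -> : alg0 = fun u e t => 0 * alg0 u e t + 0 * alg0 u e t.
  by apply: algE => * /=; rewrite mul0r addr0.
by rewrite alg_mul_combr; apply: algE => * /=; rewrite !mul0r addr0.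
Qed.

Definition homog (m : nat) X := forall u e t, size u != m -> X u e t = 0.

Lemma alg_mul_homl m X Y u e tau : homog m X ->
  alg_mul X Y u e tau = if (m <= size u)%N then
   \sum_(e1 : basis) \sum_(e2 : basis) \sum_(t1 : bool) \sum_(t2 : bool)
    (if (bmul e1 e2 == e) && (nat_of_bool t1 + nat_of_bool t2 == nat_of_bool tau)%N
     then sgn R (wsign e1 (drop m u) (+) bsign e1 e2) * X (take m u) e1 t1 * Y (drop m u) e2 t2
     else 0)
  else 0.
Proof.
move=> hX; rewrite /alg_mul.
have off_m i : size (take i u) != m ->
  \sum_(e1 : basis) \sum_(e2 : basis) \sum_(t1 : bool) \sum_(t2 : bool)
    (if (bmul e1 e2 == e) && (nat_of_bool t1 + nat_of_bool t2 == nat_of_bool tau)%N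
     then sgn R (wsign e1 (drop i u) (+) bsign e1 e2) * X (take i u) e1 t1 * Y (drop i u) e2 t2
     else 0) = 0.
  move=> hs; rewrite big1 // => e1 _; rewrite big1 // => e2 _; rewrite big1 // => t1 _.
  by rewrite big1 // => t2 _; rewrite hX // mulr0 mul0r if_same.
case: leqP => hm.
  have hm' : (m < (size u).+1)%N by rewrite ltnS.
  rewrite (sum_only1 (Ordinal hm')) //= => i ne; apply: off_m.
  rewrite size_take; case: ltnP => hi.
    by apply: contra ne => /eqP hi'; apply/eqP/val_inj.
  have ei : (i : nat) = size u by apply/eqP; rewrite eqn_leq hi -ltnS ltn_ord.
  by rewrite -ei; apply: contra ne => /eqP hi'; apply/eqP/val_inj.
rewrite big1 // => i _; apply: off_m; rewrite size_take.
by case: ltnP => hi; rewrite neq_ltn ?(ltn_trans hi hm) ?hm.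
Qed.

Lemma homog_mono w e t : homog (size w) (alg_mono R w e t).
Proof. by move=> u e' t' hs; rewrite /alg_mono; case: eqP => // eu; rewrite eu eqxx in hs. Qed.

Definition den (L : seq term) : alg R := fun u e t => ratr (coef L (u, e, t)).

Lemma den_eq L1 L2 : terms_eq L1 L2 -> den L1 = den L2.
Proof. by move=> /coef_terms_eq eqL; apply: algE => u e t; rewrite /den eqL. Qed.

Lemma den_nil : den [::] = alg0.
Proof. by apply: algE => u e t; rewrite /den rmorph0. Qed.

Lemma alg_add_den L1 L2 : alg_add (den L1) (den L2) = den (L1 ++ L2).
Proof. by apply: algE => u e t; rewrite /den /alg_add coef_cat rmorphD. Qed.

Lemma alg_scale_den c L : alg_scale (ratr c) (den L) = den (terms_scale c L).
Proof. by apply: algE => u e t; rewrite /den /alg_scale coef_scale rmorphM. Qed.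

Lemma alg_opp_den L : alg_opp (den L) = den (terms_scale (-1) L).
Proof. by rewrite -alg_scale_den; apply: algE => u e t; rewrite /alg_scale rmorphN1 mulN1r. Qed.

Lemma alg_half_den L : alg_scale (2%:R)^-1 (den L) = den (terms_scale (2%:R)^-1 L).
Proof. by rewrite -alg_scale_den fmorphV rmorph_nat. Qed.

Lemma alg_mono_den w e t : alg_mono R w e t = den (mono w e t).
Proof.
apply: algE => u e' t'; rewrite /den /mono /alg_mono /= addr0 key_eq.
by case: ifP; rewrite ?rmorph0 ?rmorph1.
Qed.

Lemma den_single c w e t : den [:: (c, (w, e, t))] = alg_scale (ratr c) (alg_mono R w e t).
Proof. by rewrite alg_mono_den alg_scale_den /= mulr1. Qed.

Lemma ratr_sgnq b : ratr (sgnq b) = sgn R b.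
Proof. by case: b; rewrite /= ?rmorphN rmorph1. Qed.

Lemma alg_mul_mono w1 e1 t1 w2 e2 t2 :
  alg_mul (alg_mono R w1 e1 t1) (alg_mono R w2 e2 t2)
  = den (term_mul (1, (w1, e1, t1)) (1, (w2, e2, t2))).
Proof.
apply: algE => u e tau; rewrite (alg_mul_homl _ _ _ _ (@homog_mono w1 e1 t1)).
rewrite (sum_only1 e1); last first.
  move=> x nx; rewrite big1 // => y _; rewrite big1 // => a _; rewrite big1 // => b _.
  by rewrite /alg_mono (negbTE nx) !andbF andFb mulr0 mul0r if_same.
rewrite (sum_only1 e2); last first.
  move=> x nx; rewrite big1 // => a _; rewrite big1 // => b _.
  by rewrite /alg_mono [x == e2](negbTE nx) !andbF andFb mulr0 if_same.
rewrite (sum_only1 t1); last first.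
  move=> x nx; rewrite big1 // => b _.
  by rewrite /alg_mono (negbTE nx) !andbF mulr0 mul0r if_same.
rewrite (sum_only1 t2); last first.
  by move=> x nx; rewrite /alg_mono (negbTE nx) !andbF mulr0 if_same.
rewrite /alg_mono !eqxx !andbT /den /term_mul.
have [->|neu] := eqVneq u (w1 ++ w2).
  rewrite size_cat leq_addr take_size_cat // drop_size_cat // !eqxx /= !mulr1.
  case: t1; case: t2; case: tau => /=; rewrite ?rmorph0 ?andbF ?andbT //;
  rewrite addr0 key_eq eqxx /= ?andbT ?(eq_sym (bmul e1 e2) e);
  by case: (e == bmul e1 e2); rewrite ?rmorph0 //= !mul1r ratr_sgnq.
have not_split : ~~ ((take (size w1) u == w1) && (drop (size w1) u == w2)).
  by apply: contra neu => /andP[/eqP h1 /eqP h2]; rewrite -h1 -h2 cat_take_drop.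
have -> : coef (if t1 && t2 then [::] else [:: (1 * 1 * sgnq (wsign e1 w2 (+) bsign e1 e2),
             (w1 ++ w2, bmul e1 e2, t1 || t2))]) (u, e, tau) = 0.
  by case: (t1 && t2) => //=; rewrite addr0 key_eq (negbTE neu).
rewrite rmorph0; case: ifP => // _; case: ifP => // _.
by move: not_split; case: (take _ _ == _); case: (drop _ _ == _); rewrite //= ?mulr0 ?mul0r.
Qed.

Lemma den_term_mul x y : alg_mul (den [:: x]) (den [:: y]) = den (term_mul x y).
Proof.
case: x => c1 [[w1 e1] t1]; case: y => c2 [[w2 e2] t2].
rewrite !den_single alg_mul_scalel alg_mul_scaler alg_mul_mono.
apply: algE => u e t; rewrite /alg_scale /den /term_mul.
case: (t1 && t2) => /=; first by rewrite rmorph0 !mulr0.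
rewrite !addr0; case: ifP => _; rewrite ?rmorph0 ?mulr0 //.
by rewrite !rmorphM !rmorph1 !mul1r mulrA.
Qed.

Lemma den_mulr x L : alg_mul (den [:: x]) (den L) = den (flatten [seq term_mul x y | y <- L]).
Proof.
elim: L => [|y L IH] /=; first by rewrite den_nil alg_mul_0r.
by rewrite -[y :: L]/([:: y] ++ L) -alg_add_den alg_mul_addr IH den_term_mul alg_add_den.
Qed.

Lemma alg_mul_den L1 L2 : alg_mul (den L1) (den L2) = den (terms_mul L1 L2).
Proof.
elim: L1 => [|x L1 IH]; first by rewrite den_nil alg_mul_0l.
rewrite /terms_mul allpairs_cons flatten_cat -alg_add_den -den_mulr.
by rewrite -[flatten _]/(terms_mul L1 L2) -IH -alg_mul_addl alg_add_den.
Qed.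

Lemma den_part b P L : part b (den P) (den L) = den (terms_part b P L).
Proof.
by case: b; rewrite /part /part0 /part1 /terms_part /Qinv
  !(alg_opp_den, alg_mul_den, alg_add_den, alg_half_den).
Qed.

Lemma den_splitv P1 P2 B1 B2 k :
  splitv (den P1) (den P2) (den B1) (den B2) k = den (terms_splitv P1 P2 B1 B2 k).
Proof.
by rewrite /splitv /terms_splitv /Qinv; case: (k < 4)%N;
  rewrite !(alg_opp_den, alg_mul_den, alg_add_den) !den_part.
Qed.

Lemma Q1_den : Q1 = den tQ1. Proof. exact: alg_mono_den. Qed.
Lemma Q2_den : Q2 = den tQ2. Proof. exact: alg_mono_den. Qed.

Lemma A1_den : A1 = den tA1.
Proof. by rewrite /A1 /Rv1 /Q1 /gen !alg_mono_den !(alg_mul_den, alg_add_den). Qed.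

Lemma A2_den : A2 = den tA2.
Proof. by rewrite /A2 /Rv2 /Q2 /gen !alg_mono_den !(alg_mul_den, alg_add_den). Qed.

Lemma rot_den a b :
  Defs.rot (den a, den b) = (den (terms_rot (a, b)).1, den (terms_rot (a, b)).2).
Proof. by rewrite /Defs.rot /tt /= alg_mono_den !(alg_opp_den, alg_mul_den, alg_add_den). Qed.

Lemma rotQ : Defs.rot (@Q1 R, @Q2 R) =
  (alg_add Q1 (alg_mono R [::] (false, true) true),
   alg_add Q2 (alg_opp (alg_mono R [::] (true, false) true))).
Proof.
have /andP[eq1 eq2] := terms_rotQ.
by rewrite Q1_den Q2_den rot_den !alg_mono_den alg_opp_den !alg_add_den (den_eq eq1) (den_eq eq2).
Qed.

Definition svar (M : nat -> nat -> rat) (k : 'I_8) : alg R := fun u e t =>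
  if u is [:: a] then
    if t then (if e == bJ then ratr (M k a) else 0)
    else (if (e == b0) && (a == k) then 1 else 0)
  else 0.

Lemma den_svar M k : den (svar_terms M k) = svar M k.
Proof.
apply: algE => u b t; rewrite /den /svar_terms -cat1s coef_cat coef_map_J //= key_eq.
case: u => [|a [|a' u]] /=; rewrite ?add0r ?addr0 ?eqseq_cons ?andbF /= ?rmorph0 //.
rewrite mem_ords andbT.
case: t => /=; rewrite ?andbF ?andbT ?add0r ?addr0; first by case: ifP; rewrite ?rmorph0.
by case: (a == k); case: (b == b0); rewrite /= ?rmorph0 ?rmorph1.
Qed.

Lemma splitv_base : splitv Q1 Q2 A1 A2 = svar (fun _ _ => 0).
Proof.
apply: functional_extensionality => k.
rewrite Q1_den Q2_den A1_den A2_den den_splitv -den_svar; apply: den_eq.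
exact: (allP terms_splitv_base k (mem_ords k)).
Qed.

Lemma splitv_rot :
  splitv (Defs.rot (Q1, Q2)).1 (Defs.rot (Q1, Q2)).2 (Defs.rot (A1, A2)).1 (Defs.rot (A1, A2)).2
  = svar rotM.
Proof.
apply: functional_extensionality => k.
rewrite Q1_den Q2_den A1_den A2_den !rot_den den_splitv -den_svar; apply: den_eq.
exact: (allP terms_splitv_rot k (mem_ords k)).
Qed.

End Denotation.

Section Evaluation.
Variable R : realFieldType.
Implicit Types (X Y : alg R) (M : nat -> nat -> rat) (f : pser R).

Lemma wsign_b0 s : wsign b0 s = false.
Proof. by elim: s => //= k s ->. Qed.

Lemma sum_basis (F : basis -> R) :
  \sum_(e : basis) F e = F (true, true) + F (true, false) + F (false, true) + F (false, false).
Proof.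
rewrite (eq_bigr (fun p : basis => F (p.1, p.2))); last by case.
by rewrite -(pair_big xpredT xpredT (fun a b => F (a, b))) /= !big_bool /= addrA.
Qed.

(* The coefficient of r_u Q_1 Q_2 in D r_w: replace one letter w_j by u_j
   using M, then move Q_1 Q_2 to the right through the rest of u. *)
Definition der_coef M (w u : seq 'I_8) : R :=
  \sum_(j < size w) (if u == set_nth ord0 w j (nth ord0 u j)
     then ratr (M (nth ord0 w j) (nth ord0 u j)) * sgn R (wsign bJ (drop j.+1 u))
     else 0).

Lemma der_coef_cons M k w a u :
  der_coef M (k :: w) (a :: u) =
    (if u == w then ratr (M k a) * sgn R (wsign bJ u) else 0)
    + (if a == k then der_coef M w u else 0).
Proof.
rewrite /der_coef big_ord_recl; congr (_ + _); first by rewrite /= eqseq_cons eqxx drop0.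
have [->|nak] := eqVneq a k.
  by apply: eq_bigr => j _; rewrite /= ?bump0 !add0n eqseq_cons eqxx.
by rewrite big1 // => j _; rewrite /= eqseq_cons (negbTE nak).
Qed.

Definition wprod_coef M (w u : seq 'I_8) (e : basis) (t : bool) : R :=
  if t then (if (e == bJ) && (size u == size w) then der_coef M w u else 0)
  else (if (u == w) && (e == b0) then 1 else 0).

Lemma homog_svar M k : homog 1 (svar R M k).
Proof. by move=> u e t; case: u => [|a [|]]. Qed.

Lemma svar_mul_sum M k a u (G : basis -> bool -> R) e t :
  \sum_(e1 : basis) \sum_(e2 : basis) \sum_(t1 : bool) \sum_(t2 : bool)
    (if (bmul e1 e2 == e) && (nat_of_bool t1 + nat_of_bool t2 == nat_of_bool t)%N
     then sgn R (wsign e1 u (+) bsign e1 e2) * svar R M k [:: a] e1 t1 * G e2 t2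
     else 0)
  = (if a == k then G e t else 0)
    + (if t then ratr (M k a) * sgn R (wsign bJ u (+) bsign bJ (bmul bJ e)) * G (bmul bJ e) false
       else 0).
Proof.
rewrite !sum_basis !big_bool /svar.
case: e => [[] []]; case: t; rewrite /= !wsign_b0 /=.
all: case: (a == k); rewrite /= ?mulr0 ?mul0r ?addr0 ?add0r ?mulr1 ?mul1r //.
all: rewrite /bJ /bsign /bmul /= ?addbF; ring.
Qed.

Lemma wprod_svar M w u e t : wprod (svar R M) w u e t = wprod_coef M w u e t.
Proof.
elim: w u e t => [|k w IH] u e t.
  rewrite /wprod /= /alg1 /alg_mono /wprod_coef /der_coef big_ord0 if_same.
  by case: t; rewrite /= ?andbF ?andbT.
have -> : wprod (svar R M) (k :: w) = alg_mul (svar R M k) (wprod_coef M w).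
  by rewrite /= -/(wprod _ w); congr alg_mul; apply: algE.
rewrite (alg_mul_homl _ _ _ _ (homog_svar M k)).
case: u => [|a u]; first by rewrite /wprod_coef; case: t; rewrite /= ?andbF.
rewrite /= take0 drop0 svar_mul_sum /wprod_coef; case: t => /=; last first.
  by rewrite eqseq_cons; case: (a == k); rewrite /= ?addr0 ?add0r.
rewrite der_coef_cons eqSS.
case: e => [[] []]; rewrite /bJ /bmul /bsign /b0 /= ?andbT; first last.
all: try by rewrite if_same add0r ?xpair_eqE /= ?andbF /= mulr0.
rewrite addbF; have [->|nuw] := eqVneq u w.
  by rewrite !eqxx mulr1; case: (a == k); rewrite ?addr0 ?add0r // addrC.
by rewrite /= mulr0 addr0 add0r; case: (size u == size w); case: (a == k).
Qed.

Lemma ps_eval_svar M f u e t :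
  ps_eval f (svar R M) u e t = \sum_(w : (size u).-tuple 'I_8) f w * wprod_coef M w u e t.
Proof.
rewrite /ps_eval big_ord_recr /= big1 ?add0r.
  by apply: eq_bigr => w _; rewrite wprod_svar.
move=> i _; rewrite big1 // => w _; rewrite wprod_svar /wprod_coef.
have hs : (size u == size w) = false.
  by rewrite size_tuple; apply/negbTE; rewrite neq_ltn ltn_ord orbT.
case: t; first by rewrite hs andbF mulr0.
have [eu|] := eqVneq u w; last by rewrite mulr0.
by move: (congr1 size eu) => /eqP; rewrite hs.
Qed.

Lemma ps_eval_svar_b0 M f u : ps_eval f (svar R M) u b0 false = f u.
Proof.
rewrite ps_eval_svar (sum_only1 (in_tuple u)) /wprod_coef ?eqxx ?mulr1 // => w nw.
have [eu|] := eqVneq u w; last by rewrite mulr0.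
by case/eqP: nw; apply: val_inj.
Qed.

Definition der_ps M f (u : seq 'I_8) : R :=
  \sum_(w : (size u).-tuple 'I_8) f w * der_coef M w u.

Lemma ps_eval_svar_bJ M f u : ps_eval f (svar R M) u bJ true = der_ps M f u.
Proof.
by rewrite ps_eval_svar; apply: eq_bigr => w _; rewrite /wprod_coef eqxx size_tuple eqxx.
Qed.

Lemma ps_eval_svar0_t f u e : ps_eval f (svar R (fun _ _ => 0)) u e true = 0.
Proof.
rewrite ps_eval_svar big1 // => w _; rewrite /wprod_coef /der_coef.
case: ifP => _; last by rewrite mulr0.
by rewrite big1 ?mulr0 // => j _; rewrite rmorph0 mul0r if_same.
Qed.

Lemma alg_mul_homr0 X Y u e tau : homog 0 Y ->
  alg_mul X Y u e tau =
   \sum_(e1 : basis) \sum_(e2 : basis) \sum_(t1 : bool) \sum_(t2 : bool)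
    (if (bmul e1 e2 == e) && (nat_of_bool t1 + nat_of_bool t2 == nat_of_bool tau)%N
     then sgn R (bsign e1 e2) * X u e1 t1 * Y [::] e2 t2 else 0).
Proof.
move=> hY; rewrite /alg_mul (sum_only1 ord_max) /=; last first.
  move=> i ni; rewrite big1 // => e1 _; rewrite big1 // => e2 _; rewrite big1 // => t1 _.
  rewrite big1 // => t2 _; rewrite hY ?mulr0 ?if_same // size_drop subn_eq0 -ltnNge.
  have := ltn_ord i; rewrite ltnS leq_eqVlt => /orP[/eqP hi|//].
  by case/eqP: ni; apply: val_inj.
by rewrite drop_size take_size.
Qed.

Lemma alg_mul_monor X b u e tau :
  alg_mul X (alg_mono R [::] b false) u e tau = sgn R (bsign (bmul e b) b) * X u (bmul e b) tau.
Proof.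
rewrite (alg_mul_homr0 _ _ _ _ (@homog_mono R [::] b false)) !sum_basis !big_bool /alg_mono /=.
by case: e => [[] []]; case: b => [[] []]; case: tau; rewrite /bmul /bsign /= ?xpair_eqE /=; ring.
Qed.

Lemma alg_mul_monotr X b u e tau :
  alg_mul X (alg_mono R [::] b true) u e tau =
  if tau then sgn R (bsign (bmul e b) b) * X u (bmul e b) false else 0.
Proof.
rewrite (alg_mul_homr0 _ _ _ _ (@homog_mono R [::] b true)) !sum_basis !big_bool /alg_mono /=.
by case: e => [[] []]; case: b => [[] []]; case: tau; rewrite /bmul /bsign /= ?xpair_eqE /=; ring.
Qed.

Lemma alg_mul_tl X u e tau :
  alg_mul (alg_mono R [::] b0 true) X u e tau = if tau then X u e false else 0.
Proof.
rewrite (alg_mul_homl _ _ _ _ (@homog_mono R [::] b0 true)) /= !sum_basis !big_bool.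
rewrite /alg_mono /= !wsign_b0 ?take0 ?drop0 ?eqxx.
by case: e => [[] []]; case: tau; rewrite /bmul /bsign /= ?xpair_eqE /= ?andbF ?andbT /=; ring.
Qed.

Lemma der_ps_scalar f : orth_invariant (FQScalar f) -> forall u, der_ps rotM f u = 0.
Proof.
move=> inv u; move: inv; rewrite /orth_invariant /evS splitv_base splitv_rot.
by move=> /(congr1 (fun X => X u bJ true)); rewrite ps_eval_svar0_t ps_eval_svar_bJ.
Qed.

Lemma der_ps_vect f1 f2 : orth_invariant (FQVect f1 f2) ->
  forall u, der_ps rotM f1 u = f2 u - f1 u /\ der_ps rotM f2 u = f1 u - f2 u.
Proof.
move=> inv u; move: inv; rewrite /orth_invariant /evV splitv_base splitv_rot rotQ /Defs.rot /=.
move=> inv; have := congr1 (fun p => p.1 u (false, true) true) inv.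
have := congr1 (fun p => p.2 u (true, false) true) inv.
rewrite /= /Q1 /Q2 /tt !alg_mul_addr !alg_mul_oppr /alg_add /alg_opp /=.
rewrite !alg_mul_monor !alg_mul_monotr !alg_mul_tl /= !alg_mul_monor /bmul /bsign /=.
rewrite !ps_eval_svar0_t !ps_eval_svar_b0 !ps_eval_svar_bJ !mulr0 !add0r !mul1r mulN1r.
move=> /eqP; rewrite -opprD eqr_opp => /eqP e2 e1.
by split; [rewrite e1 | rewrite e2]; ring.
Qed.

Lemma der_ps_pseudo f : orth_invariant (FQPseudo f) -> forall u, der_ps rotM f u = 0.
Proof.
move=> inv u; move: inv; rewrite /orth_invariant /evP splitv_base splitv_rot rotQ /=.
move=> /(congr1 (fun X => X u (false, false) true)).
rewrite /Q1 /Q2 !alg_mul_addr !alg_mul_oppr /alg_add /alg_opp /=.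
rewrite !alg_mul_monor !alg_mul_monotr /= ?alg_mul_monor ?alg_mul_monotr /bmul /bsign /=.
rewrite !ps_eval_svar0_t !ps_eval_svar_b0 !ps_eval_svar_bJ !mulr0 !mul1r !addr0 !mulN1r.
by rewrite opprK opprD subrK => /esym/eqP; rewrite oppr_eq0 => /eqP.
Qed.

End Evaluation.

Definition ord8 (l : nat) : 'I_8 := nth ord0 ords l.

Lemma ord8K (l : 'I_8) : ord8 l = l.
Proof. by apply: val_inj; case: l => [[|[|[|[|[|[|[|[|//]]]]]]]]]. Qed.

Definition circ_q (n l : nat) : rat := circ_coef rat n (ord8 l).

Definition circ_inv (l j : nat) : rat :=
  let h := (2%:R)^-1 in
  match l, j with
  | 0, 2 => 1 | 0, 3 => h | 0, 4 => h
  | 1, 0 => 1 | 1, 1 => 1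
  | 2, 6 => 1 | 2, 7 => 1
  | 3, 3 => h | 3, 4 => - h | 3, 5 => 1
  | 4, 2 => 1 | 4, 3 => - h | 4, 4 => - h
  | 5, 6 => 1 | 5, 7 => -1
  | 6, 0 => -1 | 6, 1 => 1
  | 7, 3 => - h | 7, 4 => h | 7, 5 => 1
  | _, _ => 0 end.

Definition sum8 (g : nat -> rat) : rat := foldr (fun l acc => g l + acc) 0 (iota 0 8).

Lemma circ_q_circ_inv : all (fun i => all (fun j =>
  sum8 (fun l => circ_q i.+1 l * circ_inv l j) == (i == j)%:R) (iota 0 8)) (iota 0 8).
Proof. by vm_compute. Qed.

Lemma rotM_circ_inv : all (fun l =>
  (sum8 (fun m => rotM l m * circ_inv m 3) == - 2%:R * circ_inv l 3) &&
  (sum8 (fun m => rotM l m * circ_inv m 4) == 2%:R * circ_inv l 4)) (iota 0 8).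
Proof. by vm_compute. Qed.

Section CircularBasis.
Variable R : realFieldType.

Lemma sum8_ratr (g : nat -> rat) : \sum_(l < 8) ratr (g l) = ratr (sum8 g) :> R.
Proof.
rewrite -(big_mkord xpredT (fun l => ratr (g l))) /index_iota subn0 /sum8.
by elim: (iota 0 8) => [|x s IH]; rewrite ?big_nil ?big_cons ?IH ?rmorph0 ?rmorphD.
Qed.

Lemma circ_coef_ratr n (l : 'I_8) : circ_coef R n l = ratr (circ_q n l).
Proof.
rewrite /circ_q ord8K.
have rc_ratr m : rc R m l = ratr (rc rat m l) by rewrite /rc; case: ifP; rewrite ?rmorph0 ?rmorph1.
have mixed_ratr m : mixed_coef R m l = ratr (mixed_coef rat m l).
  rewrite /mixed_coef rmorphM fmorphV rmorph_nat; congr (_ * _).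
  by case: m => [|[|[|[|[|[|[|[|[|m]]]]]]]]]; rewrite ?rmorph0 ?rmorphB ?rmorphD ?rc_ratr.
by case: n => [|[|[|[|[|[|n]]]]]]; rewrite /circ_coef ?rmorphB ?rmorphD ?mixed_ratr.
Qed.

Definition circ_inv_mx : 'M[R]_8 := \matrix_(l < 8, j < 8) ratr (circ_inv l j).

Lemma mulmx_circ_inv : circ_mx R *m circ_inv_mx = 1%:M.
Proof.
apply/matrixP => i j; rewrite !mxE.
rewrite (eq_bigr (fun l : 'I_8 => ratr (circ_q i.+1 l * circ_inv l j))); last first.
  by move=> l _; rewrite !mxE circ_coef_ratr rmorphM.
have i8 : (i : nat) \in iota 0 8 by rewrite mem_iota ltn_ord.
have j8 : (j : nat) \in iota 0 8 by rewrite mem_iota ltn_ord.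
by rewrite (sum8_ratr (fun l => circ_q i.+1 l * circ_inv l j))
  (eqP (allP (allP circ_q_circ_inv _ i8) _ j8)) rmorph_nat.
Qed.

Lemma invmx_circ : invmx (circ_mx R) = circ_inv_mx.
Proof.
have [unitC _] := mulmx1_unit mulmx_circ_inv.
by rewrite -[RHS]mul1mx -(mulVmx unitC) -mulmxA mulmx_circ_inv mulmx1.
Qed.

End CircularBasis.

Definition in45 (c : 'I_8) : bool := (c == idx4) || (c == idx5).

Definition circ_eigen (R : realFieldType) (c : 'I_8) : R :=
  if c == idx4 then - 2%:R else 2%:R.

Section Eigen.
Variable R : realFieldType.
Local Notation N := (invmx (circ_mx R)).

Lemma invmx_circE (l j : 'I_8) : N l j = ratr (circ_inv l j).
Proof. by rewrite invmx_circ mxE. Qed.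

Lemma rotM_circ_eigen (k c : 'I_8) : in45 c ->
  \sum_(m < 8) ratr (rotM k m) * N m c = circ_eigen R c * N k c.
Proof.
move=> c45; have k8 : (k : nat) \in iota 0 8 by rewrite mem_iota ltn_ord.
have /andP[/eqP e4 /eqP e5] := allP rotM_circ_inv _ k8.
rewrite (eq_bigr (fun m : 'I_8 => ratr (rotM k m * circ_inv m c))); last first.
  by move=> m _; rewrite invmx_circE rmorphM.
rewrite (sum8_ratr R (fun m => rotM k m * circ_inv m c)) invmx_circE /circ_eigen.
by case/orP: c45 => /eqP -> /=; rewrite ?e4 ?e5 rmorphM ?rmorphN rmorph_nat.
Qed.

(* rtilde_4 and rtilde_5 only involve split variables commuting with Q_1 Q_2. *)
Lemma invmx_circ_bJ (k c : 'I_8) : in45 c -> lsign bJ k -> N k c = 0.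
Proof.
rewrite invmx_circE; case/orP => /eqP ->;
by case: k => [[|[|[|[|[|[|[|[|//]]]]]]]]] ? //=; rewrite rmorph0.
Qed.

Lemma wsign_bJ s : all (fun k => ~~ lsign bJ k) s -> wsign bJ s = false.
Proof. by elim: s => //= k s IH /andP[/negbTE -> /IH ->]. Qed.

Variables (n : nat) (v : n.-tuple 'I_8).
Hypothesis v45 : all in45 v.

Definition circ_weight (u : n.-tuple 'I_8) : R := \prod_(i < n) N (tnth u i) (tnth v i).

Lemma circ_weight_sgn (u : n.-tuple 'I_8) k :
  circ_weight u * sgn R (wsign bJ (drop k u)) = circ_weight u.
Proof.
have [commJ|] := boolP (all (fun k => ~~ lsign bJ k) u).
  rewrite wsign_bJ ?mulr1 //; apply/allP => x /mem_drop; exact: (allP commJ).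
case/allPn => x /tnthP [i ->] /negPn noncommJ.
by rewrite /circ_weight (bigD1 i) //= invmx_circ_bJ ?mul0r ?(allP v45) ?mem_tnth.
Qed.

Definition set_tnth (w : n.-tuple 'I_8) (j : 'I_n) (m : 'I_8) : n.-tuple 'I_8 :=
  [tuple (if i == j then m else tnth w i) | i < n].

Lemma tnth_set_tnth w j m i : tnth (set_tnth w j m) i = if i == j then m else tnth w i.
Proof. by rewrite tnth_mktuple. Qed.

Lemma set_nth_tuple (u w : n.-tuple 'I_8) (j : 'I_n) :
  (tval u == set_nth ord0 w j (nth ord0 u j)) = (u == set_tnth w j (tnth u j)).
Proof.
apply/eqP/eqP => h.
  apply: eq_from_tnth => i; rewrite tnth_set_tnth [in LHS](tnth_nth ord0) [in LHS]h.
  by rewrite nth_set_nth /= !(tnth_nth ord0).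
apply: (@eq_from_nth _ ord0).
  by rewrite size_set_nth !size_tuple; apply/esym/maxn_idPr; rewrite ltn_ord.
move=> i; rewrite size_tuple => hi.
have := congr1 (fun t => tnth t (Ordinal hi)) h.
by rewrite /= tnth_set_tnth !(tnth_nth ord0) /= => ->; rewrite nth_set_nth.
Qed.

Lemma sum_set_tnth (w : n.-tuple 'I_8) (j : 'I_n) (G : n.-tuple 'I_8 -> R) :
  \sum_(u : n.-tuple 'I_8) (if u == set_tnth w j (tnth u j) then G u else 0)
  = \sum_(m : 'I_8) G (set_tnth w j m).
Proof.
transitivity (\sum_(m : 'I_8) \sum_(u : n.-tuple 'I_8)
                 (if u == set_tnth w j m then G u else 0)).
  rewrite exchange_big; apply: eq_bigr => u _.
  rewrite (sum_only1 (tnth u j)) // => m nm.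
  case: eqP => // hu; case/eqP: nm; by rewrite {1}hu tnth_set_tnth eqxx.
apply: eq_bigr => m _; rewrite (sum_only1 (set_tnth w j m)) ?eqxx // => u nu.
by rewrite (negbTE nu).
Qed.

Lemma circ_weight_set_tnth (w : n.-tuple 'I_8) j m :
  circ_weight (set_tnth w j m)
  = N m (tnth v j) * \prod_(i < n | i != j) N (tnth w i) (tnth v i).
Proof.
rewrite /circ_weight (bigD1 j) //= tnth_set_tnth eqxx; congr (_ * _).
by apply: eq_bigr => i /negbTE ne; rewrite tnth_set_tnth ne.
Qed.

Lemma circ_weight_der_coef (w : n.-tuple 'I_8) :
  \sum_(u : n.-tuple 'I_8) circ_weight u * der_coef R rotM w u
  = (\sum_(j < n) circ_eigen R (tnth v j)) * circ_weight w.
Proof.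
rewrite mulr_suml.
transitivity (\sum_(u : n.-tuple 'I_8) \sum_(j < n)
   (if u == set_tnth w j (tnth u j) then circ_weight u * ratr (rotM (tnth w j) (tnth u j))
    else 0)).
  apply: eq_bigr => u _; rewrite /der_coef size_tuple mulr_sumr; apply: eq_bigr => j _.
  rewrite set_nth_tuple -!(tnth_nth ord0); case: ifP => _; last by rewrite mulr0.
  by rewrite mulrCA circ_weight_sgn mulrC.
rewrite exchange_big; apply: eq_bigr => j _.
rewrite (sum_set_tnth w j (fun u => circ_weight u * ratr (rotM (tnth w j) (tnth u j)))).
rewrite (eq_bigr (fun m : 'I_8 => ratr (rotM (tnth w j) m) * N m (tnth v j)
                   * \prod_(i < n | i != j) N (tnth w i) (tnth v i))); last first.
  by move=> m _; rewrite circ_weight_set_tnth tnth_set_tnth eqxx; ring.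
rewrite -mulr_suml rotM_circ_eigen ?(allP v45) ?mem_tnth //.
by rewrite [circ_weight w](bigD1 j) //= mulrA.
Qed.

Lemma circ_weight_der_ps (f : pser R) :
  \sum_(u : n.-tuple 'I_8) circ_weight u * der_ps rotM f u
  = (\sum_(j < n) circ_eigen R (tnth v j)) * \sum_(w : n.-tuple 'I_8) f w * circ_weight w.
Proof.
under eq_bigr => u _ do rewrite /der_ps size_tuple mulr_sumr.
rewrite exchange_big mulr_sumr; apply: eq_bigr => w _.
by rewrite mulrCA -circ_weight_der_coef mulr_sumr; apply: eq_bigr => u _; ring.
Qed.

End Eigen.

Section Ptilde.
Variable R : realFieldType.
Implicit Types f g : pser R.

Lemma circ_eigen_sum (v : seq 'I_8) : all in45 v ->
  \sum_(j < size v) circ_eigen R (tnth (in_tuple v) j)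
  = - 2%:R * ((count_mem idx4 v)%:R - (count_mem idx5 v)%:R).
Proof.
rewrite -(big_tuple _ _ (in_tuple v) xpredT (circ_eigen R)) /=.
elim: v => [|x v IH] /=; first by rewrite big_nil subrr mulr0.
case/andP => x45 /IH {}IH; rewrite big_cons IH /circ_eigen.
by case/orP: x45 => /eqP ->; rewrite eqxx /= ?add0n ?add1n ?natrS; ring.
Qed.

Lemma ptilde_der (v : seq 'I_8) f g : all in45 v ->
  (forall u, der_ps rotM f u = g u) ->
  ptilde g v = - 2%:R * ((count_mem idx4 v)%:R - (count_mem idx5 v)%:R) * ptilde f v.
Proof.
move=> v45 Dfg; have := circ_weight_der_ps (v := in_tuple v) v45 f.
rewrite circ_eigen_sum // /ptilde -mulrA => <-.
by apply: eq_bigr => u _; rewrite Dfg mulrC.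
Qed.

Lemma ptilde0 v : ptilde (fun _ => 0 : R) v = 0.
Proof. by rewrite /ptilde big1 // => w _; rewrite mul0r. Qed.

Lemma ptildeB f g v : ptilde (fun w => f w - g w) v = ptilde f v - ptilde g v.
Proof. by rewrite /ptilde -sumrB; apply: eq_bigr => w _; rewrite mulrBl. Qed.

Lemma cross_eigen_eq0 (l p q : R) : l != 0 -> l + 2%:R != 0 ->
  q - p = l * p -> p - q = l * q -> p = 0.
Proof.
move=> l0 l2 epq eqp.
have h1 : (l + 1) * p = q by rewrite mulrDl mul1r -epq subrK.
have h2 : (l + 1) * q = p by rewrite mulrDl mul1r -eqp subrK.
have : l * (l + 2%:R) * p = (l + 1) * ((l + 1) * p) - p by ring.
rewrite h1 h2 subrr => /eqP; rewrite !mulf_eq0 (negbTE l0) (negbTE l2) /=.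
by move/eqP.
Qed.

End Ptilde.

Theorem mainTheorem1 (R : realFieldType) (Xi : fqop R) (s : sidx) (f : pser R)
    (v : seq 'I_8) :
  orth_invariant Xi ->
  fq_component Xi s = Some f ->
  all (fun i => (i == idx4) || (i == idx5)) v ->
  let d : int := (count_mem idx4 v)%:Z - (count_mem idx5 v)%:Z in
  d <> 0 ->
  (s = s_0 \/ s = s_12 \/ d <> 1) ->
  ptilde f v = 0.
Proof.
move=> inv comp v45 d d0 hs.
pose l : R := - 2%:R * d%:~R.
have ptilde_derE (f' g : pser R) : (forall u, der_ps rotM f' u = g u) -> ptilde g v = l * ptilde f' v.
  by move=> Dg; rewrite (ptilde_der v45 Dg) /l /d intrB -!pmulrn.
have l0 : l != 0 by rewrite mulf_eq0 negb_or oppr_eq0 pnatr_eq0 intr_eq0; apply/eqP.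
have scalar_case (f' : pser R) : (forall u, der_ps rotM f' u = 0) -> ptilde f' v = 0.
  move=> Df; have := ptilde_derE _ _ Df; rewrite ptilde0 => /esym/eqP.
  by rewrite mulf_eq0 (negbTE l0) => /eqP.
have vect_case (f1 f2 : pser R) : orth_invariant (FQVect f1 f2) -> d <> 1 ->
    ptilde f1 v = 0 /\ ptilde f2 v = 0.
  move=> vinv d1; have l2 : l + 2%:R != 0.
    rewrite (_ : l + 2%:R = - 2%:R * (d - 1)%:~R); last by rewrite intrB /l; ring.
    by rewrite mulf_eq0 negb_or oppr_eq0 pnatr_eq0 intr_eq0 subr_eq0; apply/eqP.
  have := ptilde_derE _ _ (fun u => (der_ps_vect vinv u).1).
  have := ptilde_derE _ _ (fun u => (der_ps_vect vinv u).2).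
  rewrite !ptildeB => e2 e1.
  by split; [exact: cross_eigen_eq0 l0 l2 e1 e2 | exact: cross_eigen_eq0 l0 l2 e2 e1].
case: Xi inv comp => [f0|f1 f2|f0] inv; case: s hs => //= hs [<-].
- exact: scalar_case (der_ps_scalar inv).
- by case: hs => [//|[//|/(vect_case _ _ inv) []]].
- by case: hs => [//|[//|/(vect_case _ _ inv) []]].
- exact: scalar_case (der_ps_pseudo inv).
Qed.
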